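(* Let $G$ be a stochastic game with generalized-reachability objective $\mathcal T$ of dimension $n$, and let $L,U:S\to 2^{[0,1]^n}$ be functions such that $L(s)\subseteq\mathfrak A(s)\subseteq U(s)$ for all $s\in S$. Let $U'=\mathsf{DEFLATE\_SECs}(G,L,U)$. Then for all $s\in S$: (i) $U'(s)\subseteq U(s)$ (monotonicity), and (ii) $\mathfrak A(s)\subseteq U'(s)$ (soundness).
   Context: Stochastic game $G=(S,S_\Box,S_\circ,s_0,A,\mathrm{Av},\delta)$: $S$ finite set of states partitioned into Maximizer states $S_\Box$ and Minimizer states $S_\circ$, $s_0$ initial state, $A$ finite action set, $\mathrm{Av}(s)\neq\emptyset$ the actions available in $s$, $\delta(s,a)$ a probability distribution on $S$ for $a\in\mathrm{Av}(s)$. Strategies are history-dependent and randomized; a pair $(\sigma,\tau)$ of Maximizer/Minimizer strategies and a start state $s$ induce a probability measure $\mathbb P^{\sigma,\tau}_s$ on infinite paths. Objective $\mathcal T=(T_1,\dots,T_n)$, $T_i\subseteq S$; $\Diamond T_i$ is the event of visiting $T_i$. $\mathfrak A(s)$ is the set of $\vec v\in\mathbb R^n_{\ge0}$ such that some Maximizer strategy $\sigma$ satisfies $\mathbb P^{\sigma,\tau}_s(\Diamond T_i)\ge\vec v_i$ for all Minimizer strategies $\tau$ and all $i$. Geometry: vectors compared componentwise; $\mathit{dwc}(X)=\{y\in\mathbb R^n_{\ge0}\mid\exists x\in X: y\le x\}$; $\mathbf 1=\mathit{dwc}(\{\vec 1\})$; $c\cdot X=\{cx\mid x\in X\}$; $X+Y$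 is the Minkowski sum; $\mathrm{conv}$ the convex hull. Directions: $[\vec v]=\{\lambda\vec v\mid\lambda>0\}$ for $\vec v\ne\vec 0$, $\mathsf D$ = set of directions $[\vec v]$, $\vec v\in[0,1]^n\setminus\{\vec0\}$. $X[\mathbf d]=\sup\{\|\vec x\|\mid\vec x\in X,[\vec x]=\mathbf d\}$, $\sup\emptyset=0$. A region is a subset $R\subseteq\mathsf D$; when intersected with sets of points, $R$ is identified with $\{\vec v\in[0,1]^n\mid [\vec v]\in R\}$. For $f:S\to 2^{\mathbb R^n}$, $s\in S$, $a\in\mathrm{Av}(s)$: $f(s,a):=\big(\mathit{dwc}(\{\mathbb 1_{\mathcal T}(s)\})+\sum_{s'\in S}\delta(s,a)(s')\cdot f(s')\big)\cap\mathbf 1$, where $\mathbb 1_{\mathcal T}(s)_i=1$ if $s\in T_i$ and $0$ otherwise. End components: $(s,a)$ exits $T\subseteq S$ if some $s'$ with $\delta(s,a)(s')>0$ is not in $T$; $\mathsf{Exits}(T)$ is the set of such pairs with $s\in T$, $a\in\mathrm{Av}(s)$. A nonempty $T\subseteq S$ is an end component (EC) if there is a nonempty set $B$ of actions available in $T$ such that no $(s,a)$ with $s\in T$, $a\in B\cap\mathrm{Av}(s)$ exits $T$, and any two states of $T$ are connected by a path staying in $T$ and using only actions of $B$. A maximal EC (MEC) is an EC not strictly contained in another EC; $\mathsf{MEC}(G)$ is the set of MECs of $G$. For $T\subseteq S$ and a restriction $\mathrm{Av}'$ of $\mathrm{Av}$, $\mathsf{MEC}(T|_{\mathrm{Av}'})$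 denotes the MECs of the game restricted to states in $T$ and actions in $\mathrm{Av}'$. Best exit: for $T\subseteq S$ and $f:S\to2^{\mathbb R^n}$, $\mathsf{exit}[f](T):=\big(\mathit{dwc}(\{\sum_{s\in T}\mathbb 1_{\mathcal T}(s)\})+\mathrm{conv}(\bigcup_{(s,a)\in\mathsf{Exits}(T),\,s\in S_\Box} f(s,a))\big)\cap\mathbf 1$, with the convention $\bigcup_\emptyset=\{\vec0\}$. Procedures. $\mathsf{GET\_REGIONS}(T,L)$: start with $\mathcal R=\{\mathsf D\}$; for each $s\in T\cap S_\circ$, for each $B\subseteq\mathrm{Av}(s)$ let $R_B=\{\mathbf d\in\mathsf D\mid B=\arg\min_{a\in\mathrm{Av}(s)}L(s,a)[\mathbf d]\}$, let $\mathcal R'$ be the set of nonempty $R_B$, and replace $\mathcal R$ by the common refinement of $\mathcal R$ and $\mathcal R'$ (coarsest partition containing all sets $R_1\cap R_2$, $R_1\in\mathcal R,R_2\in\mathcal R'$); return $\mathcal R$. $\mathsf{FIND\_SECs}(T,L,R)$: pick any $\mathbf d\in R$; let $\mathrm{Av}'(s)=\mathrm{Av}(s)$ for $s\notin T\cap S_\circ$ and $\mathrm{Av}'(s)=\{a\in\mathrm{Av}(s)\mid L(s,a)[\mathbf d]=\min_{b\in\mathrm{Av}(s)}L(s,b)[\mathbf d]\}$ for $s\in T\cap S_\circ$; return $\mathsf{MEC}(T|_{\mathrm{Av}'})$. $\mathsf{DEFLATE\_SECs}(G,L,U)$: for states $s$ not in any MEC set $U'(s)=U(s)$; for states in MECs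 initialize $U'(s)=\{\vec 0\}$; for each $T\in\mathsf{MEC}(G)$, let $\mathcal R=\mathsf{GET\_REGIONS}(T,L)$; for each $R\in\mathcal R$, let $\mathcal S=\mathsf{FIND\_SECs}(T,L,R)$, and for each $s\in T$: if $s\in C$ for some $C\in\mathcal S$ then $U'(s)\leftarrow U'(s)\cup(U(s)\cap\mathsf{exit}[U](C)\cap R)$, else $U'(s)\leftarrow U'(s)\cup(U(s)\cap R)$; return $U'$. *)

From HB Require Import structures.
From mathcomp Require Import all_boot all_order all_algebra.
From mathcomp Require Import boolp classical_sets reals.
From Stdlib Require Import ClassicalEpsilon.

Set Implicit Arguments.
Unset Strict Implicit.
Unset Printing Implicit Defensive.

Import Order.TTheory GRing.Theory Num.Theory.
Local Open Scope classical_set_scope.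
Local Open Scope ring_scope.

(* A stochastic game G = (S, S_Box, S_circ, s0, A, Av, delta).
   States : finType S; actions : finType A; [isMax s] iff s is a Maximizer
   state (S_Box), otherwise s is a Minimizer state (S_circ). *)
Record game (R : realType) (S A : finType) := Game {
  s_init : S;
  isMax : pred S;
  Av : S -> {set A};
  delta : S -> A -> S -> R }.

Section Games.
Variables (R : realType) (S A : finType) (n : nat).
Variable G : game R S A.
Variable Tg : 'I_n -> {set S}.

Local Notation isMax := (isMax G).
Local Notation Av := (Av G).
Local Notation delta := (delta G).

Definition wf_game : Prop :=
  (forall s, Av s != finset.set0) /\
  (forall s a, a \in Av s ->
     (forall s', 0 <= delta s a s') /\ \sum_(s' : S) delta s a s' = 1).

(* A history s_0 a_0 s_1 ... a_{k-1} s_k : the list of (s_j, a_j) pairs and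
   the current state s_k. *)
Definition hist := (seq (S * A) * S)%type.
Definition extend (h : hist) (a : A) (s' : S) : hist :=
  (rcons h.1 (h.2, a), s').

Definition strategy := hist -> A -> R.

Definition valid_strategy (pl : bool) (sg : strategy) : Prop :=
  forall h : hist, isMax h.2 = pl ->
    (forall a, 0 <= sg h a) /\ \sum_(a : A) sg h a = 1 /\
    (forall a, sg h a != 0 -> a \in Av h.2).

Definition choice (sg tau : strategy) (h : hist) : A -> R :=
  if isMax h.2 then sg h else tau h.

Fixpoint reach_within (T : {set S}) (sg tau : strategy) (k : nat) (h : hist)
    : R :=
  if h.2 \in T then 1 else
  match k with
  | 0 => 0
  | k'.+1 => \sum_(a : A) choice sg tau h a *
               \sum_(s' : S) delta h.2 a s' *
                  reach_within T sg tau k' (extend h a s')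
  end.

(* P^{sg,tau}_s (<> T) : by continuity of the measure from below, the
   probability of the event <>T is the supremum of the probabilities of the
   events "T is visited within k steps". *)
Definition prob_reach (sg tau : strategy) (s : S) (T : {set S}) : R :=
  sup (range (fun k => reach_within T sg tau k ([::], s))).

Definition vec := 'rV[R]_n.

Definition achievable (s : S) : set vec :=
  [set v | (forall i, 0 <= v ord0 i) /\
     exists sg, valid_strategy true sg /\
       forall tau, valid_strategy false tau ->
         forall i, v ord0 i <= prob_reach sg tau s (Tg i)].

Definition unit_cube : set vec :=
  [set x | forall i, 0 <= x ord0 i <= 1].

Definition dwc (X : set vec) : set vec :=
  [set y | (forall i, 0 <= y ord0 i) /\
     exists2 x, X x & forall i, y ord0 i <= x ord0 i].

Definition one_set : set vec := dwc [set const_mx 1].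

Definition scale_set (c : R) (X : set vec) : set vec := [set c *: x | x in X].

Definition msum (X Y : set vec) : set vec :=
  [set z | exists2 x, X x & exists2 y, Y y & z = x + y].

Definition conv (X : set vec) : set vec :=
  [set z | exists (m : nat) (w : 'I_m -> R) (p : 'I_m -> vec),
     (forall j, 0 <= w j /\ X (p j)) /\ \sum_(j < m) w j = 1 /\
     z = \sum_(j < m) w j *: p j].

Definition ind (s : S) : vec := \row_i (if s \in Tg i then 1 else 0).

Definition dir := set vec.
Definition dirof (v : vec) : dir := [set x | exists2 l : R, 0 < l & x = l *: v].
Definition Dset : set dir :=
  [set d | exists v, unit_cube v /\ v <> 0 /\ d = dirof v].

Definition vnorm (x : vec) : R := Num.sqrt (\sum_i x ord0 i ^+ 2).

(* X[d]  (note: sup set0 = 0 in mathcomp-reals) *)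
Definition dval (X : set vec) (d : dir) : R :=
  sup [set vnorm x | x in [set x | X x /\ dirof x = d]].

Definition region_pts (Rg : set dir) : set vec :=
  [set v | unit_cube v /\ Rg (dirof v)].

Definition sa_val (f : S -> set vec) (s : S) (a : A) : set vec :=
  msum (dwc [set ind s])
       (foldr (fun s' acc => msum (scale_set (delta s a s') (f s')) acc)
              [set 0] (enum S))
  `&` one_set.

Definition exits (T : {set S}) (s : S) (a : A) : Prop :=
  exists s', 0 < delta s a s' /\ s' \notin T.

Definition ec_edge (T : {set S}) (B : {set A}) (Av' : S -> {set A}) : rel S :=
  fun x y => [&& x \in T, y \in T &
                 [exists a in B, (a \in Av' x) && (0 < delta x a y)]].

Definition EC_in (W : {set S}) (Av' : S -> {set A}) (T : {set S}) : Prop :=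
  (T != finset.set0) /\ T \subset W /\
  exists B : {set A}, (B != finset.set0) /\
    B \subset [set a | [exists s in T, a \in Av' s]]%SET /\
    (forall s a, s \in T -> a \in B -> a \in Av' s -> ~ exits T s a) /\
    (forall x y, x \in T -> y \in T -> connect (ec_edge T B Av') x y).

Definition MEC_in (W : {set S}) (Av' : S -> {set A}) (T : {set S}) : Prop :=
  EC_in W Av' T /\
  forall T', EC_in W Av' T' -> T \subset T' -> T' = T.

Definition MEC (T : {set S}) : Prop := MEC_in [set: S]%SET Av T.

Definition exit_set (f : S -> set vec) (T : {set S}) : set vec :=
  let P := fun s a => [/\ s \in T, isMax s, a \in Av s & exits T s a] in
  msum (dwc [set \sum_(s in T) ind s])
       (conv [set x | (exists s a, P s a /\ sa_val f s a x) \/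
                      (~ (exists s a, P s a) /\ x = 0)])
  `&` one_set.

Definition argmin_act (L : S -> set vec) (s : S) (d : dir) : {set A} :=
  [set a in Av s | [forall b in Av s,
     dval (sa_val L s a) d <= dval (sa_val L s b) d]]%SET.

Definition R_B (L : S -> set vec) (s : S) (B : {set A}) : set dir :=
  [set d | Dset d /\ B = argmin_act L s d].

Definition refine (P1 P2 : set (set dir)) : set (set dir) :=
  [set Rg | (exists R1 R2, P1 R1 /\ P2 R2 /\ Rg = R1 `&` R2) /\ Rg !=set0].

Definition GET_REGIONS (T : {set S}) (L : S -> set vec) : set (set dir) :=
  foldl (fun P s => refine P [set Rg | (exists B, Rg = R_B L s B) /\ Rg !=set0])
        [set Dset] (enum [set s in T | ~~ isMax s]%SET).

Definition restr_av (T : {set S}) (L : S -> set vec) (d : dir) : S -> {set A} :=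
  fun s => if (s \in T) && ~~ isMax s then argmin_act L s d else Av s.

Definition pick_dir (Rg : set dir) : dir := epsilon (inhabits set0) Rg.

Definition FIND_SECs (T : {set S}) (L : S -> set vec) (Rg : set dir)
    : set {set S} :=
  MEC_in T (restr_av T L (pick_dir Rg)).

Definition region_contrib (L U : S -> set vec) (T : {set S}) (Rg : set dir)
    (s : S) : set vec :=
  let SC := FIND_SECs T L Rg in
  [set x | ((exists C, SC C /\ s \in C) /\
              exists C, [/\ SC C, s \in C, U s x, exit_set U C x &
                            region_pts Rg x])
        \/ (~ (exists C, SC C /\ s \in C) /\ U s x /\ region_pts Rg x)].

Definition DEFLATE_SECs (L U : S -> set vec) : S -> set vec :=
  fun s =>
    [set x | (~ (exists T, MEC T /\ s \in T) /\ U s x) \/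
             ((exists T, MEC T /\ s \in T) /\
               (x = 0 \/ exists T Rg, [/\ MEC T, s \in T,
                  GET_REGIONS T L Rg & region_contrib L U T Rg s x]))].

End Games.

(* Monotonicity is immediate, since 0 is achievable and hence in [U s].
   For soundness, let [x] be achieved from [s] by a Maximizer strategy [sg]
   and let [C] be the simple end component of [s] selected for a region
   containing the direction of [x] (the regions cover all directions).  Inside
   an end component Minimizer can keep the play in [C], so a target [Tg i]
   disjoint from [C] is reached only after Maximizer leaves [C] through some
   exit action [(t, a)].  If Minimizer stays in [C] until that first exit and
   then answers the continuation of [sg] almost optimally, [x i] is bounded by
   the expected value, over first exits and successors [s'], of what that
   continuation guarantees from [s'].  Mixing the continuations of [sg] into a
   single behavioural strategy shows that the conditional values are
   achievable from [s'], hence lie in [U s'].  After rescaling the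
   coordinates, [x] is thus the sum of a point below the targets met in [C]
   and a sub-convex combination of points of [U(t, a)], i.e. [x] lies in
   [exit_set U C]. *)

From Pilot Require Import Defs.
From HB Require Import structures.
From mathcomp Require Import all_boot all_order all_algebra.
From mathcomp Require Import boolp classical_sets reals.
From mathcomp Require Import ring.

Set Implicit Arguments.
Unset Strict Implicit.
Unset Printing Implicit Defensive.

Import Order.TTheory GRing.Theory Num.Theory.
Local Open Scope classical_set_scope.
Local Open Scope ring_scope.

Section SupSeq.
Variable R : realType.
Implicit Types (u v : nat -> R) (B c e x : R).

Definition sup_seq u := sup (range u).

Lemma has_sup_seq u B : (forall j, u j <= B) -> has_sup (range u).
Proof. by move=> uB; split; [exists (u 0%N), 0%N | exists B => _ [j _ <-]]. Qed.

Lemma sup_seq_ub u B k : (forall j, u j <= B) -> u k <= sup_seq u.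
Proof. by move=> /has_sup_seq uS; apply: sup_upper_bound => //; exists k. Qed.

Lemma sup_seq_le u B : (forall j, u j <= B) -> sup_seq u <= B.
Proof. by move=> uB; apply: ge_sup; [exists (u 0%N), 0%N | move=> _ [j _ <-]]. Qed.

Lemma sup_seq_adherent u B e : (forall j, u j <= B) -> 0 < e ->
  exists k, sup_seq u - e < u k.
Proof.
by move=> /has_sup_seq uS e0; have [_ [k _ <-] ?] := sup_adherent e0 uS; exists k.
Qed.

Lemma sup_seq_ge u B x : (forall j, u j <= B) ->
  (forall e, 0 < e -> exists k, x - e <= u k) -> x <= sup_seq u.
Proof.
move=> uB xu; apply/ler_addgt0Pr => e e0; have [k xuk] := xu e e0.
by rewrite -lerBlDr (le_trans xuk) // (sup_seq_ub _ uB).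
Qed.

Lemma le_sup_seq u v B : (forall j, v j <= B) ->
  (forall j, u j <= v j) -> sup_seq u <= sup_seq v.
Proof. by move=> vB uv; apply: sup_seq_le => j; exact: le_trans (uv j) (sup_seq_ub _ vB). Qed.

Lemma sup_seq_cst c : sup_seq (fun=> c) = c.
Proof. by apply/eqP; rewrite eq_le (sup_seq_le (B := c)) // (sup_seq_ub 0 (B := c)). Qed.

Lemma nondecreasing_seq_le u : (forall k, u k <= u k.+1) ->
  {homo u : k k' / (k <= k')%N >-> k <= k'}.
Proof. exact: homo_leq (@lexx _ R) (@le_trans _ R). Qed.

Lemma sup_seqD u v B : (forall k, u k <= u k.+1) -> (forall k, v k <= v k.+1) ->
  (forall k, u k <= B) -> (forall k, v k <= B) ->
  sup_seq (fun k => u k + v k) = sup_seq u + sup_seq v.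
Proof.
move=> uS vS uB vB; apply/eqP; rewrite eq_le; apply/andP; split.
  by apply: sup_seq_le => k; rewrite lerD // ?(sup_seq_ub _ uB) ?(sup_seq_ub _ vB).
apply: (sup_seq_ge (B := B + B)) => [k|e e0]; first exact: lerD.
have e20 : 0 < e / 2 by rewrite divr_gt0.
have [k1 uk1] := sup_seq_adherent uB e20; have [k2 vk2] := sup_seq_adherent vB e20.
exists (maxn k1 k2); rewrite {1}(splitr e) opprD addrACA lerD //.
  by rewrite (le_trans (ltW uk1)) // nondecreasing_seq_le // leq_maxl.
by rewrite (le_trans (ltW vk2)) // nondecreasing_seq_le // leq_maxr.
Qed.

Lemma sup_seqZ u B c : 0 <= c -> (forall k, u k <= B) ->
  sup_seq (fun k => c * u k) = c * sup_seq u.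
Proof.
move=> c0 uB; have [->|cn0] := eqVneq c 0.
  by rewrite mul0r -[RHS](sup_seq_cst 0); congr sup_seq; apply: funext => k; rewrite mul0r.
have cp : 0 < c by rewrite lt_def cn0 c0.
apply/eqP; rewrite eq_le; apply/andP; split.
  by apply: sup_seq_le => k; rewrite ler_wpM2l // (sup_seq_ub _ uB).
apply: (sup_seq_ge (B := c * B)) => [k|e e0]; first by rewrite ler_wpM2l.
have [k uk] := sup_seq_adherent uB (divr_gt0 e0 cp); exists k.
have -> : e = c * (e / c) by rewrite mulrC divfK // lt0r_neq0.
by rewrite -mulrBr ler_wpM2l // ltW.
Qed.

End SupSeq.

Section Geometry.
Variables (R : realType) (n : nat).
Local Notation vec := 'rV[R]_n.

Lemma conv_subconvex (X : set vec) (I : finType) (w : I -> R) (p : I -> vec) :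
  X 0 -> (forall i, X (p i)) -> (forall i, 0 <= w i) -> \sum_i w i <= 1 ->
  conv X (\sum_i w i *: p i).
Proof.
move=> X0 Xp w0 w1.
pose w' (j : 'I_#|I|.+1) := if unlift ord0 j is Some k then w (enum_val k) else 1 - \sum_i w i.
pose p' (j : 'I_#|I|.+1) := if unlift ord0 j is Some k then p (enum_val k) else 0.
exists #|I|.+1, w', p'; split.
  by move=> j; rewrite /w' /p'; case: (unlift ord0 j) => [k|]; rewrite ?subr_ge0.
have w'E k : w' (lift ord0 k) = w (enum_val k) by rewrite /w' liftK.
have p'E k : p' (lift ord0 k) = p (enum_val k) by rewrite /p' liftK.
have w'0 : w' ord0 = 1 - \sum_i w i by rewrite /w' unlift_none.
have p'0 : p' ord0 = 0 by rewrite /p' unlift_none.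
split; rewrite big_ord_recl.
  by under eq_bigr do rewrite w'E; rewrite w'0 -(big_enum_val (A := predT) w) subrK.
under [in RHS]eq_bigr do rewrite w'E p'E.
by rewrite p'0 scaler0 add0r -(big_enum_val (A := predT) (fun i => w i *: p i)).
Qed.

Lemma unit_cube_one_set (v : vec) : unit_cube v -> one_set v.
Proof.
move=> v01; split=> [i|]; first by case/andP: (v01 i).
by exists (const_mx 1) => // i; rewrite mxE; case/andP: (v01 i).
Qed.

Lemma foldr_msum_sum (S : Type) (c : S -> R) (f : S -> set vec) (u : S -> vec) r :
  (forall s, f s (u s)) ->
  foldr (fun s acc => msum (scale_set (c s) (f s)) acc) [set 0] r (\sum_(s <- r) c s *: u s).
Proof.
move=> fu; elim: r => [|s r IHr] /=; first by rewrite big_nil.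
by rewrite big_cons; exists (c s *: u s); [exists (u s) | exists (\sum_(j <- r) c j *: u j)].
Qed.

End Geometry.

Section Game.
Variables (R : realType) (S A : finType) (G : game R S A).
Hypothesis wf : wf_game G.
Local Notation isMax := (isMax G).
Local Notation Av := (Av G).
Local Notation delta := (delta G).
Local Notation reach := (reach_within G).
Local Notation strategy := (strategy R S A).
Local Notation hist := (hist S A).
Implicit Types (s t : S) (a b : A) (h g e : hist) (sg tau : strategy) (T C : {set S}).

Lemma Av_neq0 s : Av s != finset.set0.
Proof. by case: wf. Qed.

Lemma delta_ge0 s a s' : a \in Av s -> 0 <= delta s a s'.
Proof. by case: wf => _ /[apply] -[]. Qed.

Lemma sum_delta s a : a \in Av s -> \sum_s' delta s a s' = 1.
Proof. by case: wf => _ /[apply] -[]. Qed.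

Lemma delta_le1 s a s' : a \in Av s -> delta s a s' <= 1.
Proof.
move=> aAv; rewrite -(sum_delta aAv) (bigD1 s') //= lerDl.
by rewrite sumr_ge0 // => *; exact: delta_ge0.
Qed.

Definition distr_on s (c : A -> R) :=
  [/\ forall a, 0 <= c a, \sum_a c a = 1 & forall a, c a != 0 -> a \in Av s].

Lemma distr_on_bnd s c a : distr_on s c -> 0 <= c a <= 1.
Proof. by case=> c0 c1 _; rewrite c0 -c1 (bigD1 a) //= lerDl sumr_ge0. Qed.

Lemma valid_strategy_distr pl sg h : valid_strategy G pl sg -> isMax h.2 = pl ->
  distr_on h.2 (sg h).
Proof. by move=> /[apply] -[? []]. Qed.

Lemma distr_valid_strategy pl sg : (forall h, distr_on h.2 (sg h)) ->
  valid_strategy G pl sg.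
Proof. by move=> sgD h _; case: (sgD h). Qed.

Lemma choice_distr sg tau h : valid_strategy G true sg -> valid_strategy G false tau ->
  distr_on h.2 (Defs.choice G sg tau h).
Proof.
rewrite /Defs.choice => sgV tauV; case hM: (isMax h.2).
  exact: valid_strategy_distr sgV hM.
exact: valid_strategy_distr tauV hM.
Qed.

Lemma dirac_distr s b : b \in Av s -> distr_on s (fun a => (b == a)%:R).
Proof.
move=> bAv; split=> [a|| a]; first by case: (b == a).
  by rewrite (bigD1 b) //= eqxx big1 ?addr0 // => a; rewrite eq_sym => /negbTE ->.
by have [<- //|_] := eqVneq b a; rewrite eqxx.
Qed.

Definition dflt_strategy : strategy := fun h a =>
  if [pick b in Av h.2] is Some b then (b == a)%:R else 0.

Lemma dflt_strategy_distr h : distr_on h.2 (dflt_strategy h).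
Proof.
rewrite /dflt_strategy; case: pickP => [b /dirac_distr //|Av0].
by have /set0Pn [a] := Av_neq0 h.2; rewrite Av0.
Qed.

Lemma dflt_strategy_valid pl : valid_strategy G pl dflt_strategy.
Proof. exact/distr_valid_strategy/dflt_strategy_distr. Qed.

Definition expect s (c : A -> R) (f : A -> S -> R) :=
  \sum_a c a * \sum_s' delta s a s' * f a s'.

Section Expect.
Variables (s : S) (c : A -> R).
Hypothesis cD : distr_on s c.

Lemma ler_expect f f' :
  (forall a s', c a != 0 -> delta s a s' != 0 -> f a s' <= f' a s') ->
  expect s c f <= expect s c f'.
Proof.
case: cD => c0 _ cAv ff'; apply: ler_sum => a _.
have [->|ca] := eqVneq (c a) 0; first by rewrite !mul0r.
rewrite ler_wpM2l //; apply: ler_sum => s' _.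
have [->|da] := eqVneq (delta s a s') 0; first by rewrite !mul0r.
by rewrite ler_wpM2l ?delta_ge0 ?cAv ?ff'.
Qed.

Lemma expect_cst x : expect s c (fun _ _ => x) = x.
Proof.
case: cD => _ c1 cAv; rewrite /expect -[RHS]mul1r -c1 mulr_suml.
apply: eq_bigr => a _; have [->|ca] := eqVneq (c a) 0; first by rewrite !mul0r.
by rewrite -mulr_suml sum_delta ?mul1r ?cAv.
Qed.

Lemma expect_ge0 f : (forall a s', c a != 0 -> delta s a s' != 0 -> 0 <= f a s') ->
  0 <= expect s c f.
Proof. by move=> f0; rewrite -(expect_cst 0); exact: ler_expect. Qed.

Lemma expect_le f x : (forall a s', c a != 0 -> delta s a s' != 0 -> f a s' <= x) ->
  expect s c f <= x.
Proof. by move=> fx; rewrite -[leRHS](expect_cst x); exact: ler_expect. Qed.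

End Expect.

Lemma reach_withinS T sg tau k h : reach T sg tau k.+1 h =
  if h.2 \in T then 1 else
  expect h.2 (Defs.choice G sg tau h) (fun a s' => reach T sg tau k (extend h a s')).
Proof. by []. Qed.

Definition reach_from T sg tau h := sup_seq (fun k => reach T sg tau k h).

Section ValidPair.
Variables (sg tau : strategy).
Hypotheses (sgV : valid_strategy G true sg) (tauV : valid_strategy G false tau).

Lemma reach_within_bnd T k h : 0 <= reach T sg tau k h <= 1.
Proof.
elim: k h => [|k IHk] h; first by rewrite /=; case: ifP; rewrite ?lexx ?ler01.
rewrite reach_withinS; case: ifP => _; first by rewrite lexx ler01.
have cD := choice_distr h sgV tauV.
by rewrite expect_ge0 ?expect_le // => a s' _ _; case/andP: (IHk (extend h a s')).
Qed.

Lemma reach_within_ge0 T k h : 0 <= reach T sg tau k h.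
Proof. by case/andP: (reach_within_bnd T k h). Qed.

Lemma reach_within_le1 T k h : reach T sg tau k h <= 1.
Proof. by case/andP: (reach_within_bnd T k h). Qed.

Lemma reach_withinSr T k h : reach T sg tau k h <= reach T sg tau k.+1 h.
Proof.
elim: k h => [|k IHk] h.
  by have := reach_within_ge0 T 1 h; rewrite /=; case: ifP.
rewrite reach_withinS [leRHS]reach_withinS; case: ifP => // _.
by apply: ler_expect; [exact: choice_distr | move=> *; exact: IHk].
Qed.

Lemma reach_within_le_from T k h : reach T sg tau k h <= reach_from T sg tau h.
Proof. exact: sup_seq_ub (reach_within_le1 T ^~ h). Qed.

Lemma reach_from_ge0 T h : 0 <= reach_from T sg tau h.
Proof. exact: le_trans (reach_within_ge0 T 0 h) (reach_within_le_from T 0 h). Qed.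

Lemma reach_from_le1 T h : reach_from T sg tau h <= 1.
Proof. exact: sup_seq_le (reach_within_le1 T ^~ h). Qed.

Lemma reach_from_adherent T h eps : 0 < eps ->
  exists k, reach_from T sg tau h - eps < reach T sg tau k h.
Proof. exact: sup_seq_adherent (reach_within_le1 T ^~ h). Qed.

End ValidPair.

Definition hcat g h : hist := (g.1 ++ h.1, h.2).
Definition hstart h : S := head h.2 (map fst h.1).
Definition shift sg g : strategy := fun h => sg (hcat g h).

Lemma hcat_extend g h a s' : hcat g (extend h a s') = extend (hcat g h) a s'.
Proof. by rewrite /hcat /extend /= rcons_cat. Qed.

Lemma hstart_extend h a s' : hstart (extend h a s') = hstart h.
Proof. by case: h => [[|p l] t]. Qed.

Lemma shift_valid pl sg g : valid_strategy G pl sg -> valid_strategy G pl (shift sg g).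
Proof. by move=> sgV h; exact: (sgV (hcat g h)). Qed.

Section FirstExit.
Variable C : {set S}.

Definition exit_step (p : S * A) : bool :=
  [&& p.1 \in C, isMax p.1 & [exists s', (0 < delta p.1 p.2 s') && (s' \notin C)]].

Fixpoint first_exit (l : seq (S * A)) : option (seq (S * A) * (S * A) * seq (S * A)) :=
  if l is p :: l' then
    if exit_step p then Some ([::], p, l') else
    if first_exit l' is Some (l1, q, l2) then Some (p :: l1, q, l2) else None
  else None.

Lemma first_exit_cat l1 p l2 : first_exit l1 = None -> exit_step p ->
  first_exit (l1 ++ p :: l2) = Some (l1, p, l2).
Proof.
elim: l1 => [|q l1 IHl] /=; first by move=> _ ->.
by case: ifP => // _; case E: (first_exit l1) => [[[? ?] ?]|] // _ /IHl ->.
Qed.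

Lemma first_exit_rcons l p : first_exit l = None -> ~~ exit_step p ->
  first_exit (rcons l p) = None.
Proof.
elim: l => [|q l IHl] /=; first by move=> _ /negbTE ->.
by case: ifP => // _; case E: (first_exit l) => [[[? ?] ?]|] // _ /IHl ->.
Qed.

(* Minimizer follows [tau0] up to the first exit step of the play; from then
   on it follows [taug g] on the rest of the play, where [g] is the history
   ending in the state entered by that exit step. *)
Definition switch_at_exit tau0 (taug : hist -> strategy) : strategy := fun h =>
  if first_exit h.1 is Some (l1, p, l2) then taug (rcons l1 p, hstart (l2, h.2)) (l2, h.2)
  else tau0 h.

Lemma switch_at_exit_valid tau0 taug : valid_strategy G false tau0 ->
  (forall g, valid_strategy G false (taug g)) ->
  valid_strategy G false (switch_at_exit tau0 taug).
Proof.
move=> tau0V taugV h; rewrite /switch_at_exit.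
by case: (first_exit h.1) => [[[l1 p] l2]|]; [exact: (taugV _ (l2, h.2)) | exact: tau0V].
Qed.

Lemma switch_at_exit_before tau0 taug h : first_exit h.1 = None ->
  switch_at_exit tau0 taug h = tau0 h.
Proof. by rewrite /switch_at_exit => ->. Qed.

Lemma switch_at_exit_after tau0 taug l1 p s' h :
  first_exit l1 = None -> exit_step p -> hstart h = s' ->
  switch_at_exit tau0 taug (hcat (rcons l1 p, s') h) = taug (rcons l1 p, s') h.
Proof.
move=> l1N pX; rewrite /switch_at_exit /hcat /= cat_rcons first_exit_cat //.
by case: h => l t /= <-.
Qed.

Lemma reach_switch_at_exit T sg tau0 taug l1 p s' k h :
  first_exit l1 = None -> exit_step p -> hstart h = s' ->
  reach T sg (switch_at_exit tau0 taug) k (hcat (rcons l1 p, s') h) =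
  reach T (shift sg (rcons l1 p, s')) (taug (rcons l1 p, s')) k h.
Proof.
move=> l1N pX; elim: k h => [|k IHk] h hs //.
rewrite !reach_withinS /=; case: ifP => // _.
apply: eq_bigr => a _; rewrite /Defs.choice switch_at_exit_after //.
congr (_ * _); apply: eq_bigr => s'' _.
by rewrite -hcat_extend IHk // hstart_extend.
Qed.

End FirstExit.

Fixpoint hist_weight_from sg (pre l : seq (S * A)) : R :=
  if l is p :: l' then
    (if isMax p.1 then sg (pre, p.1) p.2 else 1) * hist_weight_from sg (rcons pre p) l'
  else 1.

Definition hist_weight sg h := hist_weight_from sg [::] h.1.

Lemma hist_weight_from_rcons sg pre l p : hist_weight_from sg pre (rcons l p) =
  hist_weight_from sg pre l * (if isMax p.1 then sg (pre ++ l, p.1) p.2 else 1).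
Proof.
elim: l pre => [|q l IHl] pre /=; first by rewrite mulr1 mul1r cats0.
by rewrite IHl mulrA cat_rcons.
Qed.

Lemma hist_weight_extend sg h b s' :
  hist_weight sg (extend h b s') = hist_weight sg h * (if isMax h.2 then sg h b else 1).
Proof. by case: h => l t; rewrite /hist_weight /extend /= hist_weight_from_rcons. Qed.

Lemma hist_weight_bnd sg h : valid_strategy G true sg -> 0 <= hist_weight sg h <= 1.
Proof.
move=> sgV; rewrite /hist_weight; elim: h.1 [::] => [|p l IHl] pre /=.
  by rewrite ler01 lexx.
have /andP [w0 w1] : 0 <= (if isMax p.1 then sg (pre, p.1) p.2 else 1) <= 1.
  case: ifP => hM; last by rewrite ler01 lexx.
  exact: distr_on_bnd (valid_strategy_distr (h := (pre, p.1)) sgV hM).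
by case/andP: (IHl (rcons pre p)) => W0 W1; rewrite mulr_ge0 //= mulr_ile1.
Qed.

Section Guaranteed.
Variables (sg : strategy) (T : {set S}).
Hypothesis sgV : valid_strategy G true sg.

Definition cont_reach g : set R :=
  [set reach_from T (shift sg g) tau ([::], g.2) | tau in valid_strategy G false].

Definition guaranteed g : R := inf (cont_reach g).

Lemma has_inf_cont_reach g : has_inf (cont_reach g).
Proof.
split; first by exists (reach_from T (shift sg g) dflt_strategy ([::], g.2));
  exists dflt_strategy => //; exact: dflt_strategy_valid.
by exists 0 => _ [tau tauV <-]; exact: reach_from_ge0 (shift_valid g sgV) tauV _ _.
Qed.

Lemma guaranteed_le g tau : valid_strategy G false tau ->
  guaranteed g <= reach_from T (shift sg g) tau ([::], g.2).
Proof.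
by move=> tauV; apply: ge_inf; [case: (has_inf_cont_reach g) | exists tau].
Qed.

Lemma guaranteed_bnd g : 0 <= guaranteed g <= 1.
Proof.
have [ne _] := has_inf_cont_reach g.
rewrite lb_le_inf //=; last first.
  by move=> _ [tau tauV <-]; exact: reach_from_ge0 (shift_valid g sgV) tauV _ _.
have tauV := @dflt_strategy_valid false.
exact: le_trans (guaranteed_le g tauV) (reach_from_le1 (shift_valid g sgV) tauV _ _).
Qed.

Lemma guaranteed_adherent g eps : 0 < eps -> exists tau, valid_strategy G false tau /\
  reach_from T (shift sg g) tau ([::], g.2) <= guaranteed g + eps.
Proof.
move=> eps0; have [_ [tau tauV <-] lt] := inf_adherent eps0 (has_inf_cont_reach g).
by exists tau; split=> //; exact: ltW.
Qed.

End Guaranteed.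

Section Achievable.
Variables (n : nat) (Tg : 'I_n -> {set S}).
Local Notation vec := 'rV[R]_n.

Lemma achievable_dwc s (v v' : vec) : achievable G Tg s v ->
  (forall i, 0 <= v' ord0 i <= v ord0 i) -> achievable G Tg s v'.
Proof.
move=> [_ [sg [sgV sgv]]] v'v; split=> [i|]; first by case/andP: (v'v i).
exists sg; split=> // tau tauV i.
by case/andP: (v'v i) => _ /le_trans; apply; exact: sgv.
Qed.

Lemma achievable0 s : achievable G Tg s 0.
Proof.
split=> [i|]; first by rewrite mxE.
exists dflt_strategy; split=> [|tau tauV i]; first exact: dflt_strategy_valid.
by rewrite mxE; exact: reach_from_ge0 (@dflt_strategy_valid true) tauV _ _.
Qed.

Variable U : S -> set vec.

Lemma sa_val_sum t a (u : S -> vec) : (forall s', U s' (u s')) ->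
  unit_cube (\sum_s' delta t a s' *: u s') ->
  sa_val G Tg U t a (\sum_s' delta t a s' *: u s').
Proof.
move=> Uu u01; split; last exact: unit_cube_one_set.
exists 0.
  by split=> [i|]; [rewrite mxE | exists (ind R Tg t) => // i; rewrite !mxE; case: ifP].
exists (\sum_(s' <- enum S) delta t a s' *: u s'); first exact: foldr_msum_sum.
by rewrite add0r big_enum.
Qed.

Lemma sa_val0 t a : (forall s, U s 0) -> sa_val G Tg U t a 0.
Proof.
move=> U0; have := @sa_val_sum t a (fun _ => 0) U0.
by rewrite big1 => [|s' _]; rewrite ?scaler0 //; apply=> i; rewrite mxE lexx ler01.
Qed.

End Achievable.

Definition min_can_stay C := forall t, t \in C -> ~~ isMax t ->
  exists2 b, b \in Av t & forall s', 0 < delta t b s' -> s' \in C.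

Section ExitExpectation.
Variables (C : {set S}) (sg : strategy) (s0 : S).
Hypothesis sgV : valid_strategy G true sg.

Definition stay_action t :=
  [pick b in Av t | [forall s', (0 < delta t b s') ==> (s' \in C)]].

Definition stay_strategy : strategy := fun h =>
  if (h.2 \in C) && ~~ isMax h.2 then
    if stay_action h.2 is Some b then fun a => (b == a)%:R else dflt_strategy h
  else dflt_strategy h.

Lemma stay_strategy_valid : valid_strategy G false stay_strategy.
Proof.
apply: distr_valid_strategy => h; rewrite /stay_strategy.
case: ifP => _; last exact: dflt_strategy_distr.
rewrite /stay_action; case: pickP => [b /andP [bAv _]|_]; first exact: dirac_distr.
exact: dflt_strategy_distr.
Qed.

Lemma stay_strategy_stays h a s' : min_can_stay C -> h.2 \in C -> ~~ isMax h.2 ->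
  stay_strategy h a != 0 -> 0 < delta h.2 a s' -> s' \in C.
Proof.
move=> Cstay hC hM; rewrite /stay_strategy hC hM /= /stay_action.
case: pickP => [b /andP [_ /forallP bstay]|noStay].
  by have [<- _ /(implyP (bstay s'))|] := eqVneq b a; rewrite ?eqxx.
have [b bAv bstay] := Cstay _ hC hM; move: (noStay b); rewrite bAv /=.
by move/negP; case; apply/forallP => s''; apply/implyP; exact: bstay.
Qed.

Definition play_choice h := Defs.choice G sg stay_strategy h.

Lemma play_choice_distr h : distr_on h.2 (play_choice h).
Proof. exact: choice_distr sgV stay_strategy_valid. Qed.

Definition exit_event e a := exit_step C (e.2, a) && (a \in Av e.2).

(* Expectation of [f e a] at the first exit step [(e.2, a)] of a play from [h]
   under [sg] and [stay_strategy], counting only exits within [k] steps. *)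
Fixpoint exit_expect_within k h (f : hist -> A -> R) : R :=
  if k is k'.+1 then
    \sum_a play_choice h a * (if exit_step C (h.2, a) then f h a else
      \sum_s' delta h.2 a s' * exit_expect_within k' (extend h a s') f)
  else 0.

Local Notation EE := exit_expect_within.

Lemma eq_exit_expect_within k h f f' :
  (forall e a, exit_event e a -> f e a = f' e a) -> EE k h f = EE k h f'.
Proof.
move=> ff'; elim: k h => [|k IHk] h //=; apply: eq_bigr => a _.
have [_ _ cAv] := play_choice_distr h.
have [->|ca] := eqVneq (play_choice h a) 0; first by rewrite !mul0r.
case: ifP => aX; first by rewrite ff' // /exit_event aX cAv.
by congr (_ * _); apply: eq_bigr => s' _; rewrite IHk.
Qed.

Lemma ler_exit_expect_within k h f f' :
  (forall e a, exit_event e a -> f e a <= f' e a) -> EE k h f <= EE k h f'.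
Proof.
move=> ff'; elim: k h => [|k IHk] h //=; apply: ler_sum => a _.
have [c0 _ cAv] := play_choice_distr h.
have [->|ca] := eqVneq (play_choice h a) 0; first by rewrite !mul0r.
rewrite ler_wpM2l //; case: ifP => aX; first by rewrite ff' // /exit_event aX cAv.
by apply: ler_sum => s' _; rewrite ler_wpM2l ?IHk ?delta_ge0 ?cAv.
Qed.

Lemma exit_expect_within0 k h : EE k h (fun _ _ => 0) = 0.
Proof.
elim: k h => [|k IHk] h //=; rewrite big1 // => a _.
by case: ifP => _; rewrite ?mulr0 // big1 ?mulr0 // => s' _; rewrite IHk mulr0.
Qed.

Lemma exit_expect_within_ge0 k h f :
  (forall e a, exit_event e a -> 0 <= f e a) -> 0 <= EE k h f.
Proof. by move=> f0; rewrite -(exit_expect_within0 k h) ler_exit_expect_within. Qed.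

Lemma exit_expect_within_le k h f B : 0 <= B ->
  (forall e a, exit_event e a -> f e a <= B) -> EE k h f <= B.
Proof.
move=> B0 fB; elim: k h => [|k IHk] h //=.
have [c0 c1 cAv] := play_choice_distr h.
rewrite -[leRHS]mul1r -c1 mulr_suml; apply: ler_sum => a _.
have [->|ca] := eqVneq (play_choice h a) 0; first by rewrite !mul0r.
rewrite ler_wpM2l //; case: ifP => aX; first by rewrite fB // /exit_event aX cAv.
rewrite -[leRHS]mul1r -(sum_delta (cAv _ ca)) mulr_suml.
by apply: ler_sum => s' _; rewrite ler_wpM2l ?IHk ?delta_ge0 ?cAv.
Qed.

Lemma exit_expect_withinD k h f f' :
  EE k h (fun e a => f e a + f' e a) = EE k h f + EE k h f'.
Proof.
elim: k h => [|k IHk] h /=; first by rewrite addr0.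
rewrite -big_split /=; apply: eq_bigr => a _; rewrite -mulrDr; congr (_ * _).
by case: ifP => _ //; rewrite -big_split; apply: eq_bigr => s' _; rewrite IHk mulrDr.
Qed.

Lemma exit_expect_withinZ k h f c : EE k h (fun e a => c * f e a) = c * EE k h f.
Proof.
elim: k h => [|k IHk] h /=; first by rewrite mulr0.
rewrite mulr_sumr; apply: eq_bigr => a _; rewrite mulrCA; congr (_ * _).
by case: ifP => _ //; rewrite mulr_sumr; apply: eq_bigr => s' _; rewrite IHk mulrCA.
Qed.

Lemma exit_expect_withinSr k h f : (forall e a, exit_event e a -> 0 <= f e a) ->
  EE k h f <= EE k.+1 h f.
Proof.
move=> f0; elim: k h => [|k IHk] h; first exact: exit_expect_within_ge0.
rewrite [leLHS]/= [leRHS]/=; apply: ler_sum => a _.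
have [c0 _ cAv] := play_choice_distr h.
have [->|ca] := eqVneq (play_choice h a) 0; first by rewrite !mul0r.
rewrite ler_wpM2l //; case: ifP => // _.
by apply: ler_sum => s' _; rewrite ler_wpM2l ?IHk ?delta_ge0 ?cAv.
Qed.

(* Monotone convergence for the truncated expectations: a finite horizon only
   sees finitely many exit events, so one index [k] serves all of them. *)
Lemma exit_expect_within_sup (F : nat -> hist -> A -> R) (f : hist -> A -> R) :
  (forall k e a, exit_event e a -> F k e a <= F k.+1 e a) ->
  (forall e a eps, exit_event e a -> 0 < eps -> exists k, f e a - eps <= F k e a) ->
  forall K h eps, 0 < eps -> exists k, EE K h f - eps <= EE K h (F k).
Proof.
move=> FS Ff; have Fle k k' e a : exit_event e a -> (k <= k')%N -> F k e a <= F k' e a.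
  by move=> eaX; apply: (nondecreasing_seq_le (u := fun j => F j e a)) => j; exact: FS.
elim=> [|K IHK] h eps eps0 /=; first by exists 0%N; rewrite sub0r oppr_le0 ltW.
have [c0 c1 cAv] := play_choice_distr h.
have step (p : A * S) : exists k,
    (exit_event h p.1 -> f h p.1 - eps <= F k h p.1) /\
    EE K (extend h p.1 p.2) f - eps <= EE K (extend h p.1 p.2) (F k).
  case: p => a s' /=; have [k1 k1E] := IHK (extend h a s') eps eps0.
  have [k2 k2f] : exists k, exit_event h a -> f h a - eps <= F k h a.
    by case: (boolP (exit_event h a)) => [/Ff/(_ eps0) [k]|]; [exists k | exists 0%N].
  exists (maxn k1 k2); split=> [haX|].
    by rewrite (le_trans (k2f haX)) // Fle // leq_maxr.
  rewrite (le_trans k1E) // ler_exit_expect_within // => e b ebX.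
  by rewrite Fle // leq_maxl.
have [kp kpE] := fin_all_exists step; exists (\max_p kp p).
have kp_max p : (kp p <= \max_p kp p)%N by exact: (@leq_bigmax_cond _ _ _ p).
rewrite -[X in _ - X]mul1r -c1 mulr_suml -sumrB; apply: ler_sum => a _.
rewrite -mulrBr; have [->|ca] := eqVneq (play_choice h a) 0; first by rewrite !mul0r.
have aAv := cAv a ca; rewrite ler_wpM2l //; case: ifP => aX.
  have haX : exit_event h a by rewrite /exit_event aX aAv.
  by rewrite (le_trans ((kpE (a, h.2)).1 haX)) // Fle // kp_max.
rewrite -[X in _ - X]mul1r -(sum_delta aAv) mulr_suml -sumrB; apply: ler_sum => s' _.
rewrite -mulrBr ler_wpM2l ?delta_ge0 // (le_trans (kpE (a, s')).2) //.
by rewrite ler_exit_expect_within // => e b ebX; rewrite Fle // kp_max.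
Qed.

Definition exit_expect (f : hist -> A -> R) := sup_seq (fun k => EE k ([::], s0) f).

Definition bounded_on_exits (f : hist -> A -> R) (B : R) :=
  forall e a, exit_event e a -> 0 <= f e a <= B.

Lemma exit_expect_within_bnd f B k h : 0 <= B -> bounded_on_exits f B ->
  0 <= EE k h f <= B.
Proof.
move=> B0 fB; rewrite exit_expect_within_ge0 ?exit_expect_within_le // => e a /fB /andP [] //.
Qed.

Lemma exit_expect_within_le_sup f B k : 0 <= B -> bounded_on_exits f B ->
  EE k ([::], s0) f <= exit_expect f.
Proof.
move=> B0 fB; apply: (sup_seq_ub (B := B)) => j.
by case/andP: (exit_expect_within_bnd j ([::], s0) B0 fB).
Qed.

Lemma exit_expect_bnd f B : 0 <= B -> bounded_on_exits f B -> 0 <= exit_expect f <= B.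
Proof.
move=> B0 fB; have [EE0 _] := andP (exit_expect_within_bnd 0 ([::], s0) B0 fB).
rewrite (le_trans EE0 (exit_expect_within_le_sup 0 B0 fB)) /=.
by apply: sup_seq_le => j; case/andP: (exit_expect_within_bnd j ([::], s0) B0 fB).
Qed.

Lemma eq_exit_expect f f' : (forall e a, exit_event e a -> f e a = f' e a) ->
  exit_expect f = exit_expect f'.
Proof. by move=> ff'; congr sup_seq; apply: funext => k; exact: eq_exit_expect_within. Qed.

Lemma ler_exit_expect f f' B : 0 <= B -> bounded_on_exits f' B ->
  (forall e a, exit_event e a -> f e a <= f' e a) -> exit_expect f <= exit_expect f'.
Proof.
move=> B0 f'B ff'; apply: (le_sup_seq (B := B)) => j.
  by case/andP: (exit_expect_within_bnd j ([::], s0) B0 f'B).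
exact: ler_exit_expect_within.
Qed.

Lemma exit_expect0 : exit_expect (fun _ _ => 0) = 0.
Proof.
rewrite /exit_expect -[RHS](sup_seq_cst 0); congr sup_seq.
by apply: funext => k; rewrite exit_expect_within0.
Qed.

Lemma exit_expectD f f' B B' : 0 <= B -> 0 <= B' ->
  bounded_on_exits f B -> bounded_on_exits f' B' ->
  exit_expect (fun e a => f e a + f' e a) = exit_expect f + exit_expect f'.
Proof.
move=> B0 B'0 fB f'B; rewrite /exit_expect; under eq_fun do rewrite exit_expect_withinD.
have f0 e a : exit_event e a -> 0 <= f e a by move/fB/andP => [].
have f'0 e a : exit_event e a -> 0 <= f' e a by move/f'B/andP => [].
apply: (sup_seqD (B := B + B')) => k; rewrite ?exit_expect_withinSr //.
  case/andP: (exit_expect_within_bnd k ([::], s0) B0 fB) => _ /le_trans; apply.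
  by rewrite lerDl.
case/andP: (exit_expect_within_bnd k ([::], s0) B'0 f'B) => _ /le_trans; apply.
by rewrite lerDr.
Qed.

Lemma exit_expectZ f c B : 0 <= c -> 0 <= B -> bounded_on_exits f B ->
  exit_expect (fun e a => c * f e a) = c * exit_expect f.
Proof.
move=> c0 B0 fB; rewrite /exit_expect; under eq_fun do rewrite exit_expect_withinZ.
by apply: (sup_seqZ (B := B)) => // k; case/andP: (exit_expect_within_bnd k ([::], s0) B0 fB).
Qed.

Lemma bounded_on_exitsZ f c B : 0 <= c <= 1 -> bounded_on_exits f B ->
  bounded_on_exits (fun e a => c * f e a) B.
Proof.
move=> /andP [c0 c1] fB e a /fB /andP [f0 fle]; rewrite mulr_ge0 //=.
exact: le_trans (ler_piMl f0 c1) fle.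
Qed.

Lemma bounded_on_exits_sum (I : Type) (r : seq I) (F : I -> hist -> A -> R) B :
  (forall j, bounded_on_exits (F j) B) ->
  bounded_on_exits (fun e a => \sum_(j <- r) F j e a) ((size r)%:R * B).
Proof.
move=> FB e a eaX; elim: r => [|j r]; first by rewrite big_nil mul0r lexx.
case/andP: (FB j e a eaX) => Fj0 FjB /andP [Fr0 FrB].
by rewrite big_cons addr_ge0 //= -add1n natrD mulrDl mul1r lerD.
Qed.

Lemma exit_expect_sum (I : Type) (r : seq I) (F : I -> hist -> A -> R) B :
  0 <= B -> (forall j, bounded_on_exits (F j) B) ->
  exit_expect (fun e a => \sum_(j <- r) F j e a) = \sum_(j <- r) exit_expect (F j).
Proof.
move=> B0 FB; elim: r => [|j r IHr].
  rewrite big_nil -[RHS]exit_expect0.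
  by apply: eq_exit_expect => e a _; rewrite big_nil.
under eq_exit_expect do rewrite big_cons.
rewrite (exit_expectD (B := B) (B' := (size r)%:R * B)) ?IHr ?big_cons ?mulr_ge0 //.
exact: bounded_on_exits_sum.
Qed.

Lemma exit_expect_sum2 (I J : finType) (c : I -> J -> R) (F : I -> J -> hist -> A -> R) :
  (forall i j, 0 <= c i j <= 1) -> (forall i j, bounded_on_exits (F i j) 1) ->
  exit_expect (fun e a => \sum_i \sum_j c i j * F i j e a) =
  \sum_i \sum_j c i j * exit_expect (F i j).
Proof.
move=> c01 F1; have cF1 i j : bounded_on_exits (fun e a => c i j * F i j e a) 1.
  exact: bounded_on_exitsZ.
rewrite (exit_expect_sum _ (B := (size (index_enum J))%:R)) //; last first.
  by move=> i; rewrite -[(size _)%:R]mulr1; exact: bounded_on_exits_sum.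
apply: eq_bigr => i _; rewrite (exit_expect_sum _ (B := 1)) //.
by apply: eq_bigr => j _; case/andP: (c01 i j) => c0 _; rewrite (exit_expectZ (B := 1)).
Qed.

Lemma exit_expect_le_sup_seq (F : nat -> hist -> A -> R) f B :
  0 <= B -> (forall k, bounded_on_exits (F k) B) ->
  (forall k e a, exit_event e a -> F k e a <= F k.+1 e a) ->
  (forall e a eps, exit_event e a -> 0 < eps -> exists k, f e a - eps <= F k e a) ->
  exit_expect f <= sup_seq (fun k => exit_expect (F k)).
Proof.
move=> B0 FB FS Ff; apply: sup_seq_le => K; apply/ler_addgt0Pr => eps eps0.
have [k kE] := exit_expect_within_sup FS Ff K ([::], s0) eps0.
rewrite -lerBlDr (le_trans kE) // (le_trans (exit_expect_within_le_sup K B0 (FB k))) //.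
by apply: (sup_seq_ub (B := B)) => j; case/andP: (exit_expect_bnd B0 (FB j)).
Qed.

Section Decomposition.
Hypothesis Cstay : min_can_stay C.
Variable T : {set S}.
Hypothesis CT : [disjoint C & T]%B.
Variable taug : hist -> strategy.
Hypothesis taugV : forall g, valid_strategy G false (taug g).

Local Notation tau_sw := (switch_at_exit C stay_strategy taug).

Definition exit_reach e a := \sum_s' delta e.2 a s' *
  reach_from T (shift sg (extend e a s')) (taug (extend e a s')) ([::], s').

Lemma exit_reach_bnd : bounded_on_exits exit_reach 1.
Proof.
have sgV' g := shift_valid g sgV.
move=> e a /andP [_ aAv]; apply/andP; split.
  apply: sumr_ge0 => s' _.
  by rewrite mulr_ge0 ?delta_ge0 ?(reach_from_ge0 (sgV' _) (taugV _)).
rewrite -(sum_delta aAv); apply: ler_sum => s' _.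
by rewrite ler_piMr ?delta_ge0 ?(reach_from_le1 (sgV' _) (taugV _)).
Qed.

Lemma reach_within_le_exit_expect k h : h.2 \in C -> first_exit C h.1 = None ->
  reach T sg tau_sw k h <= EE k h exit_reach.
Proof.
elim: k h => [|k IHk] h hC hN /=; first by rewrite (disjointFr CT hC).
rewrite (disjointFr CT hC) /Defs.choice; apply: ler_sum => a _.
have -> : (if isMax h.2 then sg h else tau_sw h) = play_choice h.
  by rewrite /play_choice /Defs.choice switch_at_exit_before.
have [c0 _ cAv] := play_choice_distr h.
have [->|ca] := eqVneq (play_choice h a) 0; first by rewrite !mul0r.
rewrite ler_wpM2l //; case: ifP => aX; apply: ler_sum => s' _.
  have hE : extend h a s' = hcat (rcons h.1 (h.2, a), s') ([::], s').
    by rewrite /hcat /extend /= cats0.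
  rewrite {1}hE reach_switch_at_exit // ler_wpM2l ?delta_ge0 ?cAv //.
  exact: reach_within_le_from (shift_valid _ sgV) (taugV _) _ _ _.
have [->|dn0] := eqVneq (delta h.2 a s') 0; first by rewrite !mul0r.
have d0 : 0 < delta h.2 a s' by rewrite lt_def dn0 delta_ge0 ?cAv.
rewrite ler_wpM2l ?delta_ge0 ?cAv // IHk //; last by rewrite /extend /= first_exit_rcons ?aX.
case hM: (isMax h.2).
  move/negbT: aX; rewrite /exit_step /= hC hM /= negb_exists => /forallP /(_ s').
  by rewrite d0 negbK.
apply: (stay_strategy_stays Cstay hC _ _ d0); first by rewrite hM.
by move: ca; rewrite /play_choice /Defs.choice hM.
Qed.

Lemma reach_from_le_exit_expect : s0 \in C ->
  reach_from T sg tau_sw ([::], s0) <= exit_expect exit_reach.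
Proof.
move=> s0C; apply: sup_seq_le => k.
rewrite (le_trans (@reach_within_le_exit_expect k ([::], s0) s0C erefl)) //.
exact: exit_expect_within_le_sup ler01 exit_reach_bnd.
Qed.

End Decomposition.

Section Mixture.
Variables (wt : hist -> A -> R) (sgf : hist -> A -> strategy).
Hypothesis wt01 : forall e a, 0 <= wt e a <= 1.
Hypothesis sgfV : forall e a, valid_strategy G true (sgf e a).

Definition mix_weight h e a := wt e a * hist_weight (sgf e a) h.
Definition mix_mass h := exit_expect (mix_weight h).
Definition mix_mass_act h b := exit_expect (fun e a => mix_weight h e a * sgf e a h b).

(* The behavioural strategy realising the mixture of the strategies [sgf e a]
   with weights [wt e a] under the exit distribution: after [h] it plays [b]
   with the conditional probability that the mixture plays [b], given that the
   mixture produced [h]. *)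
Definition mix_strategy : strategy := fun h b =>
  if isMax h.2 && (0 < mix_mass h) then mix_mass_act h b / mix_mass h
  else dflt_strategy h b.

Lemma mix_weight_bnd h e a : 0 <= mix_weight h e a <= 1.
Proof.
case/andP: (wt01 e a) => w0 w1; case/andP: (hist_weight_bnd h (sgfV e a)) => W0 W1.
by rewrite mulr_ge0 //= mulr_ile1.
Qed.

Lemma mix_mass_bnd h : 0 <= mix_mass h <= 1.
Proof. by apply: exit_expect_bnd ler01 _ => e a _; exact: mix_weight_bnd. Qed.

Lemma mix_mass_act_bounded h b : isMax h.2 ->
  bounded_on_exits (fun e a => mix_weight h e a * sgf e a h b) 1.
Proof.
move=> hM e a _; case/andP: (mix_weight_bnd h e a) => W0 W1.
case/andP: (distr_on_bnd b (valid_strategy_distr (sgfV e a) hM)) => s0' s1'.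
by rewrite mulr_ge0 //= mulr_ile1.
Qed.

Lemma mix_mass_act_ge0 h b : isMax h.2 -> 0 <= mix_mass_act h b.
Proof. by move=> hM; case/andP: (exit_expect_bnd ler01 (mix_mass_act_bounded b hM)). Qed.

Lemma sum_mix_mass_act h : isMax h.2 -> \sum_b mix_mass_act h b = mix_mass h.
Proof.
move=> hM; rewrite /mix_mass_act.
rewrite -(exit_expect_sum _ ler01 (fun b => mix_mass_act_bounded b hM)).
apply: eq_exit_expect => e a _; rewrite -mulr_sumr.
by case: (valid_strategy_distr (sgfV e a) hM) => _ -> _; rewrite mulr1.
Qed.

Lemma mix_mass_act_notin_Av h b : isMax h.2 -> b \notin Av h.2 -> mix_mass_act h b = 0.
Proof.
move=> hM bAv; rewrite /mix_mass_act -exit_expect0; apply: eq_exit_expect => e a _.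
case: (valid_strategy_distr (sgfV e a) hM) => _ _ sgAv.
have [->|/sgAv] := eqVneq (sgf e a h b) 0; first by rewrite mulr0.
by rewrite (negbTE bAv).
Qed.

Lemma mix_mass_mix_strategy h b : isMax h.2 ->
  mix_mass h * mix_strategy h b = mix_mass_act h b.
Proof.
move=> hM; rewrite /mix_strategy hM /=; case: ifP => [m0|mN0].
  by rewrite mulrC divfK // gt_eqF.
have m0 : mix_mass h = 0.
  by case/andP: (mix_mass_bnd h) => m0 _; apply/eqP; rewrite eq_le m0 leNgt mN0.
rewrite m0 mul0r; apply/esym; move: (sum_mix_mass_act hM); rewrite m0.
by move/psumr_eq0P; apply=> // b' _; exact: mix_mass_act_ge0.
Qed.

Lemma mix_strategy_valid : valid_strategy G true mix_strategy.
Proof.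
move=> h hM; rewrite /mix_strategy hM /=; case: (boolP (0 < mix_mass h)) => m0 /=.
  split=> [b|]; first by rewrite divr_ge0 ?mix_mass_act_ge0 // ltW.
  split; first by rewrite -mulr_suml sum_mix_mass_act // divff // gt_eqF.
  by move=> b; apply: contraR => bAv; rewrite mix_mass_act_notin_Av // mul0r.
by case: (dflt_strategy_distr h).
Qed.

Section Against.
Variable tau : strategy.
Hypothesis tauV : valid_strategy G false tau.

Definition mix_coef h b : R :=
  if isMax h.2 then (if b \in Av h.2 then 1 else 0) else tau h b.

Lemma mix_coef_delta_bnd h b s' : 0 <= mix_coef h b * delta h.2 b s' <= 1.
Proof.
rewrite /mix_coef; case: ifP => hM.
  by case: ifP => bAv; rewrite ?mul1r ?delta_ge0 ?delta_le1 ?mul0r ?lexx ?ler01.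
have [->|tb] := eqVneq (tau h b) 0; first by rewrite mul0r lexx ler01.
have tauD := valid_strategy_distr tauV hM; have [_ _ /(_ b tb) bAv] := tauD.
case/andP: (distr_on_bnd b tauD) => t0 t1.
by rewrite mulr_ge0 ?delta_ge0 //= mulr_ile1 ?delta_ge0 ?delta_le1.
Qed.

Lemma mix_weight_extend h e a b s' :
  mix_weight h e a * Defs.choice G (sgf e a) tau h b =
  mix_coef h b * mix_weight (extend h b s') e a.
Proof.
rewrite /mix_weight /mix_coef /Defs.choice hist_weight_extend; case: ifP => hM.
  case: ifP => bAv; first by rewrite mul1r mulrA.
  have [_ _ sgAv] := valid_strategy_distr (sgfV e a) hM.
  by have [->|/sgAv] := eqVneq (sgf e a h b) 0; rewrite ?bAv // !mulr0.
by rewrite mulr1 mulrC.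
Qed.

Lemma mix_mass_extend h b s' :
  mix_mass h * Defs.choice G mix_strategy tau h b = mix_coef h b * mix_mass (extend h b s').
Proof.
rewrite /Defs.choice /mix_coef; case: ifP => hM.
  rewrite mix_mass_mix_strategy //; case: ifP => bAv.
    rewrite mul1r; apply: eq_exit_expect => e a _.
    by rewrite /mix_weight hist_weight_extend hM mulrA.
  by rewrite mix_mass_act_notin_Av ?bAv // mul0r.
rewrite mulrC; congr (_ * _); apply: eq_exit_expect => e a _.
by rewrite /mix_weight hist_weight_extend hM mulr1.
Qed.

Lemma mix_reach_within T k h : mix_mass h * reach T mix_strategy tau k h =
  exit_expect (fun e a => mix_weight h e a * reach T (sgf e a) tau k h).
Proof.
elim: k h => [|k IHk] h.
  rewrite /=; case: ifP => _; rewrite ?mulr1 ?mulr0.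
    by apply: eq_exit_expect => *; rewrite mulr1.
  by rewrite (eq_exit_expect (f' := fun _ _ => 0)) ?exit_expect0 // => *; rewrite mulr0.
rewrite reach_withinS; under eq_exit_expect do rewrite reach_withinS.
case: ifP => _; first by rewrite mulr1; apply: eq_exit_expect => *; rewrite mulr1.
transitivity (\sum_b \sum_s' mix_coef h b * delta h.2 b s' *
    (mix_mass (extend h b s') * reach T mix_strategy tau k (extend h b s'))).
  rewrite /expect mulr_sumr; apply: eq_bigr => b _; rewrite mulrA mulr_sumr.
  by apply: eq_bigr => s' _; rewrite (mix_mass_extend h b s') mulrACA.
under eq_bigr do under eq_bigr do rewrite IHk.
rewrite -exit_expect_sum2 => [|b s'|b s' e a _]; first last.
- case/andP: (mix_weight_bnd (extend h b s') e a) => W0 W1.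
  have [r0 r1] := andP (reach_within_bnd (sgfV e a) tauV T k (extend h b s')).
  by rewrite mulr_ge0 //= mulr_ile1.
- exact: mix_coef_delta_bnd.
apply: eq_exit_expect => e a _; rewrite /expect mulr_sumr; apply: eq_bigr => b _.
rewrite [RHS]mulrA [RHS]mulr_sumr; apply: eq_bigr => s' _.
by rewrite (mix_weight_extend h e a b s') mulrACA.
Qed.

Lemma exit_expect_reach_from_le_mix T s1 :
  exit_expect (fun e a => wt e a * reach_from T (sgf e a) tau ([::], s1)) <=
  mix_mass ([::], s1) * reach_from T mix_strategy tau ([::], s1).
Proof.
have r1 := reach_within_le1 mix_strategy_valid tauV T ^~ ([::], s1).
rewrite /reach_from -(sup_seqZ _ r1); last by case/andP: (mix_mass_bnd ([::], s1)).
have -> : (fun k => mix_mass ([::], s1) * reach T mix_strategy tau k ([::], s1)) =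
    (fun k => exit_expect (fun e a => wt e a * reach T (sgf e a) tau k ([::], s1))).
  apply: funext => k; rewrite mix_reach_within; apply: eq_exit_expect => e a _.
  by rewrite /mix_weight /hist_weight mulr1.
apply: exit_expect_le_sup_seq ler01 _ _ _ => [k e a _|k e a _|e a eps _ eps0];
  case/andP: (wt01 e a) => w0 w1.
- have [r0 r1'] := andP (reach_within_bnd (sgfV e a) tauV T k ([::], s1)).
  by rewrite mulr_ge0 //= mulr_ile1.
- by rewrite ler_wpM2l // reach_withinSr.
have [k kE] := reach_from_adherent (sgfV e a) tauV T ([::], s1) eps0; exists k.
rewrite (le_trans _ (ler_wpM2l w0 (ltW kE))) // mulrBr lerD2l lerN2.
by rewrite ler_piMl // ltW.
Qed.

End Against.

End Mixture.

Section ExitBound.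
Variables (n : nat) (Tg : 'I_n -> {set S}) (U : S -> set 'rV[R]_n).
Hypothesis Ucube : forall s, U s `<=` @unit_cube R n.
Hypothesis achU : forall s, achievable G Tg s `<=` U s.
Hypothesis Cstay : min_can_stay C.
Hypothesis s0C : s0 \in C.
Variable x : 'rV[R]_n.
Hypothesis xcube : @unit_cube R n x.
Hypothesis sg_x : forall tau, valid_strategy G false tau ->
  forall i, x ord0 i <= prob_reach G sg tau s0 (Tg i).
Local Notation vec := 'rV[R]_n.
Implicit Types (p : S * A) (i : 'I_n).

Definition exit_at p e a : R := ((e.2 == p.1) && (a == p.2))%:R.
Definition exit_prob p := exit_expect (exit_at p).
Definition exit_pair p := exit_step C p && (p.2 \in Av p.1).

Definition exit_value i p s' e a :=
  exit_at p e a * guaranteed sg (Tg i) (extend e p.2 s').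

(* [guaranteed] in expectation, conditioned on the first exit step being [p]
   and leading to [s']. *)
Definition cond_value p s' : vec :=
  if 0 < exit_prob p then \row_i (exit_expect (exit_value i p s') / exit_prob p) else 0.

Definition exit_guaranteed i e b :=
  \sum_s' delta e.2 b s' * guaranteed sg (Tg i) (extend e b s').

Definition avail_delta p s' := if p.2 \in Av p.1 then delta p.1 p.2 s' else 0.

Definition exit_bound i :=
  \sum_p \sum_s' avail_delta p s' * (exit_prob p * cond_value p s' ord0 i).

Lemma exit_at_bnd p e a : 0 <= exit_at p e a <= 1.
Proof. by rewrite /exit_at ler0n lern1 leq_b1. Qed.

Lemma exit_prob_bnd p : 0 <= exit_prob p <= 1.
Proof. exact: exit_expect_bnd ler01 (fun e a _ => exit_at_bnd p e a). Qed.

Lemma exit_value_bounded i p s' : bounded_on_exits (exit_value i p s') 1.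
Proof.
move=> e a _; case/andP: (exit_at_bnd p e a) => a0 a1.
case/andP: (guaranteed_bnd (Tg i) sgV (extend e p.2 s')) => g0 g1.
by rewrite mulr_ge0 //= mulr_ile1.
Qed.

Lemma cond_value_achievable p s' : achievable G Tg s' (cond_value p s').
Proof.
rewrite /cond_value; case: ifP => Q0; last exact: achievable0.
have wt01 := exit_at_bnd p.
have sgfV e a : valid_strategy G true (shift sg (extend e p.2 s')) by exact: shift_valid.
split=> [i|].
  rewrite mxE divr_ge0 ?(ltW Q0) //.
  by case/andP: (exit_expect_bnd ler01 (exit_value_bounded i p s')).
exists (mix_strategy (exit_at p) (fun e _ => shift sg (extend e p.2 s'))).
split=> [|tau tauV i]; first exact: mix_strategy_valid.
have massE :
    mix_mass (exit_at p) (fun e _ => shift sg (extend e p.2 s')) ([::], s') = exit_prob p.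
  by apply: eq_exit_expect => e a _; rewrite /mix_weight /hist_weight mulr1.
rewrite mxE ler_pdivrMr // mulrC -massE.
rewrite (le_trans _ (exit_expect_reach_from_le_mix _ _ _ _ _)) //.
apply: (ler_exit_expect ler01) => [e a _|e a _].
  case/andP: (wt01 e a) => w0 w1; have sgfV' := sgfV e a.
  by rewrite mulr_ge0 ?reach_from_ge0 //= mulr_ile1 ?reach_from_ge0 ?reach_from_le1.
by rewrite ler_wpM2l ?guaranteed_le //; case/andP: (wt01 e a).
Qed.

Lemma cond_value_bnd p s' i : 0 <= cond_value p s' ord0 i <= 1.
Proof.
have ach := cond_value_achievable p s'.
by case: (ach) => v0 _; rewrite v0; case/andP: (Ucube (achU ach) i).
Qed.

Lemma exit_expect_exit_value i p s' :
  exit_expect (exit_value i p s') = exit_prob p * cond_value p s' ord0 i.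
Proof.
rewrite /cond_value; case: ifP => Q0; first by rewrite mxE mulrC divfK // gt_eqF.
have Qeq0 : exit_prob p = 0.
  by case/andP: (exit_prob_bnd p) => Qge0 _; apply/eqP; rewrite eq_le Qge0 leNgt Q0.
rewrite mxE mulr0; apply/eqP; rewrite eq_le; apply/andP; split; last first.
  by case/andP: (exit_expect_bnd ler01 (exit_value_bounded i p s')).
rewrite -Qeq0 (ler_exit_expect ler01 (fun e a _ => exit_at_bnd p e a)) // => e a _.
case/andP: (exit_at_bnd p e a) => a0 _.
by case/andP: (guaranteed_bnd (Tg i) sgV (extend e p.2 s')) => _ g1; rewrite ler_piMr.
Qed.

Lemma exit_guaranteed_bounded i : bounded_on_exits (exit_guaranteed i) 1.
Proof.
have g01 e b s' := guaranteed_bnd (Tg i) sgV (extend e b s').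
move=> e b /andP [_ bAv]; apply/andP; split.
  by apply: sumr_ge0 => s' _; case/andP: (g01 e b s') => g0 _; rewrite mulr_ge0 ?delta_ge0.
rewrite -(sum_delta bAv); apply: ler_sum => s' _.
by case/andP: (g01 e b s') => _ g1; rewrite ler_piMr ?delta_ge0.
Qed.

(* Minimizer stays in [C] until Maximizer exits, then plays an [eps]-optimal
   reply against the continuation of [sg]. *)
Lemma le_exit_expect_guaranteed i : [disjoint C & Tg i]%B ->
  x ord0 i <= exit_expect (exit_guaranteed i).
Proof.
move=> CT; apply/ler_addgt0Pr => eps eps0.
have [taug taugE] := boolp.choice (fun g => guaranteed_adherent (Tg i) sgV g eps0).
have taugV g : valid_strategy G false (taug g) by case: (taugE g).
have swV := switch_at_exit_valid C stay_strategy_valid taugV.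
rewrite (le_trans (sg_x swV i)) // (le_trans (reach_from_le_exit_expect Cstay CT taugV s0C)) //.
have eps_ge0 : 0 <= eps by exact: ltW.
have epsB : bounded_on_exits (fun _ _ => eps) eps by move=> *; rewrite eps_ge0 lexx.
rewrite (@le_trans _ _ (exit_expect (fun e b => exit_guaranteed i e b + eps))) //.
  apply: (ler_exit_expect (B := 1 + eps)) => [|e b ebX|e b /andP [_ bAv]].
  - by rewrite addr_ge0.
  - by case/andP: (exit_guaranteed_bounded i ebX) => g0 g1; rewrite addr_ge0 //= lerD2r.
  rewrite /exit_reach /exit_guaranteed -[X in _ <= _ + X]mulr1 -(sum_delta bAv).
  rewrite mulr_sumr -big_split /=; apply: ler_sum => s' _.
  by rewrite [eps * _]mulrC -mulrDr ler_wpM2l ?delta_ge0 //; case: (taugE (extend e b s')).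
rewrite (exit_expectD ler01 eps_ge0 (exit_guaranteed_bounded i) epsB) lerD2l.
by case/andP: (exit_expect_bnd eps_ge0 epsB).
Qed.

Lemma sum_exit_at e b (F : S * A -> R) : \sum_p exit_at p e b * F p = F (e.2, b).
Proof.
rewrite (bigD1 (e.2, b)) //= /exit_at !eqxx mul1r big1 ?addr0 // => p pN.
case: andP => [[/eqP e2 /eqP bE]|_]; last by rewrite mul0r.
by move: pN; rewrite e2 bE -surjective_pairing eqxx.
Qed.

Lemma exit_expect_guaranteed i : exit_expect (exit_guaranteed i) = exit_bound i.
Proof.
have c01 p s' : 0 <= avail_delta p s' <= 1.
  by rewrite /avail_delta; case: ifP => pAv; rewrite ?lexx ?ler01 ?delta_ge0 ?delta_le1.
pose F e b := \sum_p \sum_s' avail_delta p s' * exit_value i p s' e b.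
rewrite (eq_exit_expect (f' := F)).
  rewrite (exit_expect_sum2 c01 (exit_value_bounded i)); apply: eq_bigr => p _.
  by apply: eq_bigr => s' _; rewrite exit_expect_exit_value.
move=> e b /andP [_ bAv]; rewrite /F /exit_value.
under eq_bigr do under eq_bigr do rewrite mulrCA.
under eq_bigr do rewrite -mulr_sumr.
by rewrite sum_exit_at /exit_guaranteed /avail_delta /= bAv.
Qed.

Lemma exit_prob_eq0 p : ~~ exit_pair p -> exit_prob p = 0.
Proof.
move=> pX; rewrite /exit_prob -exit_expect0; apply: eq_exit_expect => e b ebX.
rewrite /exit_at; case: andP => [[/eqP e2 /eqP bE]|] //.
by move: pX ebX; rewrite /exit_pair /exit_event e2 bE -surjective_pairing => /negP.
Qed.

Lemma sum_exit_prob : \sum_p exit_prob p <= 1.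
Proof.
rewrite /exit_prob -(exit_expect_sum _ ler01 (fun p e a _ => exit_at_bnd p e a)).
have sum1 e b : \sum_p exit_at p e b = 1.
  by rewrite -[RHS](sum_exit_at e b (fun=> 1)); apply: eq_bigr => p _; rewrite mulr1.
have sumB : bounded_on_exits (fun e b => \sum_p exit_at p e b) 1.
  by move=> e b _; rewrite sum1 lexx ler01.
by case/andP: (exit_expect_bnd ler01 sumB).
Qed.

(* Coordinates [i] with [C] meeting [Tg i] are paid for by the first summand
   of [exit_set]; the others are rescaled to match [x] exactly. *)
Definition exit_scale i :=
  if [disjoint C & Tg i]%B && (0 < exit_bound i) then x ord0 i / exit_bound i else 0.

Lemma le_exit_bound i : [disjoint C & Tg i]%B -> x ord0 i <= exit_bound i.
Proof. by move=> CT; rewrite -exit_expect_guaranteed le_exit_expect_guaranteed. Qed.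

Lemma exit_scale_bnd i : 0 <= exit_scale i <= 1.
Proof.
rewrite /exit_scale; case: ifP => [/andP [CT Y0]|_]; last by rewrite lexx ler01.
case/andP: (xcube i) => x0 _.
by rewrite divr_ge0 ?(ltW Y0) //= ler_pdivrMr // mul1r le_exit_bound.
Qed.

Lemma exit_scale_exit_bound i : [disjoint C & Tg i]%B ->
  exit_scale i * exit_bound i = x ord0 i.
Proof.
move=> CT; rewrite /exit_scale CT /=; case: ifP => Y0; first by rewrite divfK // gt_eqF.
case/andP: (xcube i) => x0 _; rewrite mul0r; apply/eqP; rewrite eq_le x0 /=.
by rewrite (le_trans (le_exit_bound CT)) // leNgt Y0.
Qed.

Lemma exit_scale_eq0 i : ~~ [disjoint C & Tg i]%B -> exit_scale i = 0.
Proof. by rewrite /exit_scale => /negbTE ->. Qed.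

Definition scaled_value p s' : vec := \row_i (exit_scale i * cond_value p s' ord0 i).

Lemma scaled_value_achievable p s' : achievable G Tg s' (scaled_value p s').
Proof.
apply: achievable_dwc (cond_value_achievable p s') _ => i; rewrite mxE.
case/andP: (exit_scale_bnd i) => k0 k1; case/andP: (cond_value_bnd p s' i) => v0 v1.
by rewrite mulr_ge0 //= ler_piMl.
Qed.

Definition exit_point p : vec :=
  if exit_pair p then \sum_s' delta p.1 p.2 s' *: scaled_value p s' else 0.

Definition exit_mix : vec := \sum_p exit_prob p *: exit_point p.

Lemma exit_mix_entry i : exit_mix ord0 i = exit_scale i * exit_bound i.
Proof.
rewrite /exit_mix /exit_bound summxE mulr_sumr; apply: eq_bigr => p _.
rewrite mxE /exit_point; case: ifP => [/andP [_ pAv]|pX]; last first.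
  by rewrite exit_prob_eq0 ?pX // mul0r big1 ?mulr0 // => s' _; rewrite mul0r mulr0.
rewrite summxE /avail_delta pAv !mulr_sumr; apply: eq_bigr => s' _.
by rewrite !mxE; ring.
Qed.

Lemma exit_point_sa_val p : exit_pair p -> sa_val G Tg U p.1 p.2 (exit_point p).
Proof.
move=> pX; rewrite /exit_point pX; have [_ pAv] := andP pX.
apply: sa_val_sum => [s'|i]; first exact/achU/scaled_value_achievable.
rewrite summxE; apply/andP; split.
  apply: sumr_ge0 => s' _; rewrite !mxE mulr_ge0 ?delta_ge0 //.
  case/andP: (exit_scale_bnd i) => k0 _.
  by case/andP: (cond_value_bnd p s' i) => v0 _; rewrite mulr_ge0.
rewrite -(sum_delta pAv); apply: ler_sum => s' _; rewrite !mxE ler_piMr ?delta_ge0 //.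
case/andP: (exit_scale_bnd i) => k0 k1; case/andP: (cond_value_bnd p s' i) => v0 v1.
by rewrite mulr_ile1.
Qed.

Lemma exit_residual_dwc : dwc [set \sum_(s in C) ind R Tg s] (x - exit_mix).
Proof.
have ind_ge0 s j : 0 <= ind R Tg s ord0 j by rewrite mxE; case: ifP.
split=> [i|].
  rewrite !mxE exit_mix_entry; have [CT|CT] := boolP [disjoint C & Tg i]%B.
    by rewrite exit_scale_exit_bound // subrr.
  by rewrite exit_scale_eq0 // mul0r subr0; case/andP: (xcube i).
exists (\sum_(s in C) ind R Tg s) => // i.
rewrite !mxE exit_mix_entry summxE; have [CT|CnT] := boolP [disjoint C & Tg i]%B.
  by rewrite exit_scale_exit_bound // subrr sumr_ge0.
have /pred0Pn [t /andP [tC tT]] := CnT.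
rewrite exit_scale_eq0 // mul0r subr0 (bigD1 t) //= mxE ifT //.
by case/andP: (xcube i) => _ x1; rewrite (le_trans x1) // lerDl sumr_ge0.
Qed.

Lemma exit_set_achieved : exit_set G Tg U C x.
Proof.
split; last exact: unit_cube_one_set.
exists (x - exit_mix); first exact: exit_residual_dwc.
exists exit_mix; last by rewrite subrK.
set X := (X in conv X _).
have X0 : X 0.
  case: (pselect (exists t a, [/\ t \in C, isMax t, a \in Av t & exits G C t a])).
    move=> [t [a tX]]; left; exists t, a; split=> //.
    exact: sa_val0 (fun s => achU (achievable0 Tg s)).
  by right.
apply: (conv_subconvex X0 _ _ sum_exit_prob) => p; last by case/andP: (exit_prob_bnd p).
have [pX|pX] := boolP (exit_pair p); last by rewrite /exit_point (negbTE pX); exact: X0.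
left; exists p.1, p.2; split; last exact: exit_point_sa_val.
case/andP: pX => /and3P [pC pM /existsP [s' /andP [d0 s'C]]] pAv.
by split=> //; exists s'.
Qed.

End ExitBound.

End ExitExpectation.

End Game.

Section Regions.
Variables (R : realType) (S A : finType) (n : nat) (G : game R S A).
Variables (Tg : 'I_n -> {set S}) (L : S -> set 'rV[R]_n).

Definition covers_dirs (P : set (set (dir R n))) :=
  forall d, Dset d -> exists Rg, P Rg /\ Rg d.

Lemma refine_argmin_covers P s : covers_dirs P ->
  covers_dirs (refine P [set Rg | (exists B, Rg = R_B G Tg L s B) /\ Rg !=set0]).
Proof.
move=> Pcov d dD; have [R1 [PR1 R1d]] := Pcov d dD.
pose R2 := R_B G Tg L s (argmin_act G Tg L s d).
have R2d : R2 d by [].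
exists (R1 `&` R2); split=> //; split; last by exists d.
by exists R1, R2; do 2!split=> //; split; [exists (argmin_act G Tg L s d) | exists d].
Qed.

Lemma GET_REGIONS_covers T : covers_dirs (GET_REGIONS G Tg T L).
Proof.
have : covers_dirs [set @Dset R n] by move=> d dD; exists (@Dset R n).
rewrite /GET_REGIONS; elim: (enum _) [set @Dset R n] => [|s l IHl] P //= Pcov.
exact/IHl/refine_argmin_covers.
Qed.

Lemma restr_av_sub T d s a : a \in restr_av G Tg T L d s -> a \in Av G s.
Proof. by rewrite /restr_av; case: ifP => // _; rewrite inE => /andP []. Qed.

End Regions.

Lemma EC_in_min_can_stay (R : realType) (S A : finType) (G : game R S A)
    (T C : {set S}) (Av' : S -> {set A}) :
  (forall s a, a \in Av' s -> a \in Av G s) -> EC_in G T Av' C -> min_can_stay G C.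
Proof.
move=> Av'Av [_ [_ [B [/set0Pn [b bB] [Bsub [noexit Cconn]]]]]] t tC _.
have stay a : a \in B -> a \in Av' t -> forall s', 0 < delta G t a s' -> s' \in C.
  by move=> aB aAv s' d0; apply/negPn/negP => s'C; apply: (noexit t a tC aB aAv); exists s'.
(* Either the first edge of a path from [t] to another state of [C] stays in
   [C], or [C = [set t]] and every action of [B] is available at [t]. *)
case: (pselect (exists2 y, y \in C & y <> t)) => [[y yC yt]|Ct].
  case/connectP: (Cconn t y tC yC) => -[_ yE|z p /=]; first by case: yt.
  case/andP=> /and3P [_ _ /existsP [a /andP [aB /andP [aAv _]]]] _ _.
  by exists a; [exact: Av'Av | exact: stay].
have := fintype.subsetP Bsub b bB; rewrite inE => /existsP [s /andP [sC bAv]].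
have st : s = t by apply: contrapT => st; apply: Ct; exists s.
by subst s; exists b; [exact: Av'Av | exact: stay].
Qed.

Theorem lemma4p4 (R : realType) (S A : finType) (n : nat) (G : game R S A)
    (Tg : 'I_n -> {set S}) (L U : S -> set 'rV[R]_n) :
  wf_game G ->
  (forall s, L s `<=` (@unit_cube R n)) ->
  (forall s, U s `<=` (@unit_cube R n)) ->
  (forall s, L s `<=` achievable G Tg s) ->
  (forall s, achievable G Tg s `<=` U s) ->
  forall s, DEFLATE_SECs G Tg L U s `<=` U s /\
            achievable G Tg s `<=` DEFLATE_SECs G Tg L U s.
Proof.
move=> wf _ Ucube _ achU s; split.
  move=> x [[_ Ux]|[_ [->|[T [Rg [_ _ _ [[_ [C [_ _ Ux _ _]]]|[_ [Ux _]]]]]]]]] //.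
  exact/achU/achievable0.
move=> x xA; have [[T [TMEC sT]]|noMEC] := pselect (exists T, MEC G T /\ s \in T);
  last by left; split=> //; exact: achU.
right; split; first by exists T.
have [->|x0] := pselect (x = 0); [by left | right].
have xcube := Ucube s x (achU s x xA).
have xdir : Dset (dirof x) by exists x.
have [Rg [RgT Rgx]] := GET_REGIONS_covers G Tg L T xdir.
exists T, Rg; split=> //.
have [[C [CSEC sC]]|noSEC] :=
  pselect (exists C, FIND_SECs G Tg T L Rg C /\ s \in C); last first.
  by right; split=> //; split; [exact: achU | split].
left; split; first by exists C.
exists C; split=> //; first exact: achU.
have [_ [sg [sgV sgx]]] := xA.
have Cstay := EC_in_min_can_stay (@restr_av_sub _ _ _ _ G Tg L T _) CSEC.1.
exact (exit_set_achieved wf sgV Ucube achU Cstay sC xcube sgx).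
Qed.
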